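(* Let $\Phi = \{\xi = (\tau_L,\delta_L,\tau_R,\delta_R) \in \mathbb{R}^4 : \tau_L > |\delta_L + 1|,\ \tau_R < -|\delta_R+1|\}$ and $\alpha(\xi) = \tau_L\tau_R + (\delta_L - 1)(\delta_R - 1)$. If $\xi \in \Phi$ and $\delta_L + \delta_R \ge 0$, then $\alpha(\xi) < 0$. *)

From Stdlib Require Import Reals Lra.
Open Scope R_scope.

Definition xi4 : Type := (R * R * R * R)%type.

Definition Phi (xi : xi4) : Prop :=
  let '(tauL, deltaL, tauR, deltaR) := xi in
  tauL > Rabs (deltaL + 1) /\ tauR < - Rabs (deltaR + 1).

Definition alpha (xi : xi4) : R :=
  let '(tauL, deltaL, tauR, deltaR) := xi in
  tauL * tauR + (deltaL - 1) * (deltaR - 1).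

(* On Phi, [tauL * (- tauR) > |deltaL + 1| |deltaR + 1| >= (deltaL + 1)(deltaR + 1)],
   so alpha is below (deltaL - 1)(deltaR - 1) - (deltaL + 1)(deltaR + 1), which is
   -2 (deltaL + deltaR). *)
From Stdlib Require Import Reals Lra.
Open Scope R_scope.

Lemma Rmult_lt_abs_bounds (x y a b : R) :
  Rabs x < a -> Rabs y < b -> x * y < a * b.
Proof.
  intros Hx Hy.
  apply Rle_lt_trans with (Rabs x * Rabs y).
  - rewrite <- Rabs_mult. apply RRle_abs.
  - apply Rmult_le_0_lt_compat; auto using Rabs_pos.
Qed.

Lemma alpha_lt_on_Phi (tauL deltaL tauR deltaR : R) :
  Phi (tauL, deltaL, tauR, deltaR) ->
  alpha (tauL, deltaL, tauR, deltaR) < -2 * (deltaL + deltaR).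
Proof.
  intros [HL HR]; simpl.
  assert (Hprod : (deltaL + 1) * (deltaR + 1) < tauL * - tauR).
  { apply Rmult_lt_abs_bounds; lra. }
  lra.
Qed.

Theorem proposition4p2 (tauL deltaL tauR deltaR : R) :
  Phi (tauL, deltaL, tauR, deltaR) ->
  deltaL + deltaR >= 0 ->
  alpha (tauL, deltaL, tauR, deltaR) < 0.
Proof.
  intros Hphi Hsum.
  pose proof (alpha_lt_on_Phi _ _ _ _ Hphi).
  lra.
Qed.
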